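(* Let $E$ be a real finite-dimensional inner product space with inner product $(a,b)\mapsto (ab)$ and norm $|\cdot|$, and let $v:\mathbb{R}\to\mathbb{R}$ be an odd homeomorphism ($v(-\alpha)=-v(\alpha)$). For $a\neq b$ put $e=(a-b)/|a-b|$ and $v_{ab}:E\to E$, $v_{ab}(c)=c+(v((ce))-(ce))e$. Then $v_{ab}$ is a bijection with $v_{ab}^{-1}(c)=c+(v^{-1}((ce))-(ce))e$, and the map $f:E\times E\times[0,1]\to E$ given by $f(a,b,\gamma)=v_{ab}^{-1}\big((1-\gamma)v_{ab}(a)+\gamma v_{ab}(b)\big)$ for $a\ne b$ and $f(a,a,\gamma)=a$ is a continuous solution of the geodesic functional equations (with $D=E\times E$). Moreover, for all $a,b,\gamma$, $|a-f(a,b,\gamma)|+|f(a,b,\gamma)-b|=|a-b|$, so $f(a,b,\gamma)$ lies on the segment joining $a$ and $b$; in particular $f(B\times B\times[0,1])=B$ for every open ball $B\subset E$.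
   Context: For a topological manifold $M$, a solution of the geodesic functional equations is a continuous map $f:D\times[0,1]\to M$, with $D\subset M\times M$ open containing the diagonal, such that for all $(a,b)\in D$ and $\alpha,\beta,\gamma\in[0,1]$: $f(a,b,0)=a$, $f(a,b,1)=b$, $(f(a,b,\alpha),f(a,b,\beta))\in D$, and $f(a,b,(1-\gamma)\alpha+\gamma\beta)=f(f(a,b,\alpha),f(a,b,\beta),\gamma)$. *)

From HB Require Import structures.
From mathcomp Require Import all_boot all_order all_algebra.
From mathcomp Require Import all_classical all_reals all_analysis.
Set Implicit Arguments. Unset Strict Implicit. Unset Printing Implicit Defensive.
Import Order.TTheory GRing.Theory Num.Theory.
Import numFieldNormedType.Exports.
Local Open Scope classical_set_scope.
Local Open Scope ring_scope.

Definition geodesic_solution (R : realType) (M : topologicalType)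
  (D : set (M * M)) (f : M -> M -> R -> M) : Prop :=
  open D /\ (forall a, D (a, a)) /\
  {within [set x : (M * M) * R | D x.1 /\ x.2 \in `[0, 1]],
     continuous (fun x => f x.1.1 x.1.2 x.2)} /\
  (forall a b, D (a, b) -> forall al be ga : R,
     al \in `[0, 1] -> be \in `[0, 1] -> ga \in `[0, 1] ->
     [/\ f a b 0 = a, f a b 1 = b, D (f a b al, f a b be) &
         f a b ((1 - ga) * al + ga * be) = f (f a b al) (f a b be) ga]).

Definition dotp (R : realType) (n : nat) (u w : 'rV[R]_n) : R :=
  \sum_(i < n) u 0 i * w 0 i.

Definition enorm (R : realType) (n : nat) (u : 'rV[R]_n) : R :=
  Num.sqrt (dotp u u).

Definition unitdir (R : realType) (n : nat) (a b : 'rV[R]_n) : 'rV[R]_n :=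
  (enorm (a - b))^-1 *: (a - b).

Definition vab (R : realType) (n : nat) (v : R -> R) (a b c : 'rV[R]_n)
  : 'rV[R]_n :=
  c + (v (dotp c (unitdir a b)) - dotp c (unitdir a b)) *: unitdir a b.

(* f(a,b,g) = v_ab^{-1}((1-g) v_ab(a) + g v_ab(b)) for a <> b, f(a,a,g) = a;
   v_ab^{-1} is given by the formula with vinv = v^{-1}. *)
Definition geof (R : realType) (n : nat) (v vinv : R -> R)
  (a b : 'rV[R]_n) (g : R) : 'rV[R]_n :=
  if a == b then a
  else vab vinv a b ((1 - g) *: vab v a b a + g *: vab v a b b).

From Pilot Require Import Defs.
From HB Require Import structures.
From mathcomp Require Import all_boot all_order all_algebra.
From mathcomp Require Import all_classical all_reals all_analysis.
From mathcomp Require Import ring lra.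
Import Order.TTheory GRing.Theory Num.Theory.
Import numFieldNormedType.Exports.
Local Open Scope classical_set_scope.
Local Open Scope ring_scope.
Set Implicit Arguments. Unset Strict Implicit.

(* For a <> b everything happens on the line through a and b.  In the
   coordinate t = (x e) along e = (a - b)/|a - b|, the map v_ab acts on that
   line as t |-> v t, and since v is odd the same map is obtained from any two
   distinct points of the line.  Hence f(a,b,.) reads, in coordinates,
   g |-> v^-1((1 - g) v(a e) + g v(b e)): the functional equation reduces to
   the affinity of g |-> (1 - g) v(a e) + g v(b e), and the monotonicity of
   v^-1 keeps f(a,b,g) on the segment [a, b], which yields the distance
   identity, the image of balls and continuity at the diagonal.  Off the
   diagonal f is a composite of continuous maps. *)

Lemma conv_ltr (R : realDomainType) (mu p q r : R) : 0 <= mu <= 1 ->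
  p < r -> q < r -> mu * p + (1 - mu) * q < r.
Proof.
move=> /andP[m0 m1] pr qr; have [->|m_gt0] := eqVneq mu 0; first lra.
have m_pos : 0 < mu by rewrite lt_def m_gt0 m0.
have -> : r = mu * r + (1 - mu) * r by ring.
by rewrite ltr_leD ?ltr_pM2l // ler_wpM2l ?subr_ge0 // ltW.
Qed.

Section InnerProduct.
Variables (R : realType) (n : nat).
Implicit Types (u w z : 'rV[R]_n) (k : R).

Lemma dotpDl u w z : dotp (u + w) z = dotp u z + dotp w z.
Proof. by rewrite /dotp -big_split; apply: eq_bigr => i _; rewrite mxE mulrDl. Qed.

Lemma dotpZl k u z : dotp (k *: u) z = k * dotp u z.
Proof. by rewrite /dotp mulr_sumr; apply: eq_bigr => i _; rewrite mxE mulrA. Qed.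

Lemma dotpC u w : dotp u w = dotp w u.
Proof. by apply: eq_bigr => i _; rewrite mulrC. Qed.

Lemma dotpNl u z : dotp (- u) z = - dotp u z.
Proof. by rewrite -scaleN1r dotpZl mulN1r. Qed.

Lemma dotpBl u w z : dotp (u - w) z = dotp u z - dotp w z.
Proof. by rewrite dotpDl dotpNl. Qed.

Lemma dotpZr k u z : dotp z (k *: u) = k * dotp z u.
Proof. by rewrite dotpC dotpZl dotpC. Qed.

Lemma dotpNr u z : dotp z (- u) = - dotp z u.
Proof. by rewrite dotpC dotpNl dotpC. Qed.

Lemma dotp_ge0 u : 0 <= dotp u u.
Proof. by apply: sumr_ge0 => i _; rewrite -expr2 sqr_ge0. Qed.

Lemma dotp_eq0 u : (dotp u u == 0) = (u == 0).
Proof.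
apply/idP/eqP => [|->]; last by rewrite /dotp big1 // => i _; rewrite mxE mul0r.
rewrite psumr_eq0 => [/allP u0|i _]; last by rewrite -expr2 sqr_ge0.
apply/rowP => i; rewrite mxE; apply/eqP.
by have /implyP/(_ isT) := u0 i (mem_index_enum i); rewrite mulf_eq0 orbb.
Qed.

Lemma enorm_ge0 u : 0 <= enorm u.
Proof. exact: sqrtr_ge0. Qed.

Lemma enorm_sqr u : enorm u ^+ 2 = dotp u u.
Proof. by rewrite sqr_sqrtr // dotp_ge0. Qed.

Lemma enormZ k u : enorm (k *: u) = `|k| * enorm u.
Proof. by rewrite /enorm dotpZl dotpZr mulrA -expr2 sqrtrM ?sqr_ge0 // sqrtr_sqr. Qed.

Lemma enorm_eq0 u : (enorm u == 0) = (u == 0).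
Proof. by rewrite sqrtr_eq0 le_eqVlt ltNge dotp_ge0 orbF dotp_eq0. Qed.

Lemma enorm0 : enorm (0 : 'rV[R]_n) = 0.
Proof. by apply/eqP; rewrite enorm_eq0. Qed.

Lemma enorm_lt u r : 0 < r -> (enorm u < r) = (dotp u u < r ^+ 2).
Proof. by move=> r0; rewrite -enorm_sqr ltr_pXn2r // ?nnegrE ?enorm_ge0 ?ltW. Qed.

Lemma dotp_conv u w mu :
  dotp (mu *: u + (1 - mu) *: w) (mu *: u + (1 - mu) *: w) =
  mu * dotp u u + (1 - mu) * dotp w w - mu * (1 - mu) * dotp (u - w) (u - w).
Proof.
rewrite !(dotpDl, dotpBl, dotpZl) dotpC !(dotpDl, dotpBl, dotpZl, dotpNl).
rewrite ![dotp _ (_ + _)]dotpC !(dotpDl, dotpBl, dotpZl, dotpNl) (dotpC w u).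
ring.
Qed.

Lemma enorm_conv_lt u w mu r :
  0 < r -> 0 <= mu <= 1 -> enorm u < r -> enorm w < r ->
  enorm (mu *: u + (1 - mu) *: w) < r.
Proof.
move=> r0 mu01; rewrite !enorm_lt // dotp_conv => ur wr.
apply: le_lt_trans (conv_ltr mu01 ur wr); rewrite lerBlDr lerDl.
by case/andP: mu01 => m0 m1; rewrite !mulr_ge0 ?subr_ge0 ?dotp_ge0.
Qed.

Section Direction.
Variables a b : 'rV[R]_n.
Hypothesis ab : a != b.

Lemma enorm_subr_gt0 : 0 < enorm (a - b).
Proof. by rewrite lt_def enorm_eq0 subr_eq0 ab enorm_ge0. Qed.

Lemma subr_unitdir : a - b = enorm (a - b) *: unitdir a b.
Proof. by rewrite scalerA divff ?scale1r // gt_eqF // enorm_subr_gt0. Qed.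

Lemma dotp_unitdir : dotp (unitdir a b) (unitdir a b) = 1.
Proof.
rewrite dotpZl dotpZr mulrA -enorm_sqr -expr2 -exprMn mulVf ?expr1n //.
by rewrite gt_eqF // enorm_subr_gt0.
Qed.

Lemma enorm_unitdir : enorm (unitdir a b) = 1.
Proof. by rewrite /enorm dotp_unitdir sqrtr1. Qed.

End Direction.
End InnerProduct.

Lemma continuous_inj_mono (R : realType) (f : R -> R) :
  continuous f -> injective f ->
  {mono f : x y / x <= y} \/ {mono f : x y /~ x <= y}.
Proof.
move=> fC fI; have inR (x : R) : x \in `]-oo, +oo[ by rewrite in_itv.
have fC' : {within [set` `]-oo, +oo[%R], continuous f}.
  exact: continuous_subspaceT.
have fI' : {in `]-oo, +oo[ &, injective f} by move=> x y _ _ /fI.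
have [f01|f10] := leP (f 0) (f 1); [left|right] => x y.
  by apply: (itv_continuous_inj_le _ fC' fI') => //; exists 0, 1; rewrite !inR.
by apply: (itv_continuous_inj_ge _ fC' fI') => //; exists 0, 1; rewrite !inR ltW.
Qed.

Lemma can_conv_in_itv (R : realType) (f g : R -> R) (p q t : R) :
  continuous f -> cancel f g -> cancel g f -> p <= q -> 0 <= t <= 1 ->
  p <= g ((1 - t) * f q + t * f p) <= q.
Proof.
move=> fC fK gK pq /andP[t0 t1].
have [fM|fM] := continuous_inj_mono fC (can_inj fK).
  by move: pq; rewrite -(fM p) -(fM _ q) -(fM p) gK => fpq; apply/andP; split; nra.
by move: pq; rewrite -(fM q p) -(fM _ p) -(fM q) gK => fqp; apply/andP; split; nra.
Qed.

Section LineMaps.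
Variables (R : realType) (n : nat).
Implicit Types (a b c : 'rV[R]_n) (w : R -> R).

Lemma vab_can w w' a b : a != b -> cancel w w' -> cancel (vab w a b) (vab w' a b).
Proof.
move=> ab wK c; rewrite /vab dotpDl dotpZl dotp_unitdir // mulr1 addrCA subrr.
by rewrite addr0 wK -addrA -scalerDl addrA subrK subrr scale0r addr0.
Qed.

Lemma vab_unitdir_eq w a b a' b' : (forall x, w (- x) = - w x) ->
  unitdir a' b' = unitdir a b \/ unitdir a' b' = - unitdir a b ->
  vab w a' b' = vab w a b.
Proof.
move=> w_odd [] E; apply/funext => c; rewrite /vab E //.
rewrite dotpNr w_odd scalerN -scaleNr; congr (_ + _ *: _).
by rewrite opprB opprK addrC.
Qed.

Lemma unitdir_parallel a b a' b' m : a != b -> m != 0 ->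
  a' - b' = m *: unitdir a b ->
  unitdir a' b' = unitdir a b \/ unitdir a' b' = - unitdir a b.
Proof.
move=> ab m0 E; rewrite /unitdir -/(unitdir a b) E enormZ enorm_unitdir //.
rewrite mulr1 scalerA; have [m_gt0|m_le0] := ltrP 0 m.
  by left; rewrite gtr0_norm // mulVf // scale1r.
by right; rewrite ler0_norm // invrN mulNr mulVf // scaleN1r.
Qed.

End LineMaps.

Section Limits.
Variables (R : realType) (n : nat) (T : Type) (F : set_system T).
Context {FF : Filter F}.
Implicit Types (c d : T -> 'rV[R]_n).

Lemma cvg_dotp c d u w : c @ F --> u -> d @ F --> w ->
  (fun y => dotp (c y) (d y)) @ F --> dotp u w.
Proof.
move=> cu dw; apply: (@cvg_big _ _ +%R 0 xpredT _ _ _ _ (fun i y => c y 0 i * d y 0 i)).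
  exact: add_continuous.
move=> i _; apply: cvgM.
  exact: (cvg_comp _ _ cu (@coord_continuous _ 1 n 0 i u)).
exact: (cvg_comp _ _ dw (@coord_continuous _ 1 n 0 i w)).
Qed.

Lemma cvg_enorm c u : c @ F --> u -> (fun y => enorm (c y)) @ F --> enorm u.
Proof. by move=> cu; apply: (cvg_comp _ _ (cvg_dotp cu cu)); exact: sqrt_continuous. Qed.

Lemma cvg_unitdir c d a b : a != b -> c @ F --> a -> d @ F --> b ->
  (fun y => unitdir (c y) (d y)) @ F --> unitdir a b.
Proof.
move=> ab ca db; apply: cvgZ; last exact: cvgB.
by apply: cvgV; [rewrite gt_eqF ?enorm_subr_gt0 | exact: (cvg_enorm (cvgB ca db))].
Qed.

Lemma cvg_vab (w : R -> R) c d z a b x : continuous w -> a != b ->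
  c @ F --> a -> d @ F --> b -> z @ F --> x ->
  (fun y => vab w (c y) (d y) (z y)) @ F --> vab w a b x.
Proof.
move=> wC ab ca db zx; have e_cvg := cvg_unitdir ab ca db.
have s_cvg := cvg_dotp zx e_cvg.
apply: cvgD => //; apply: cvgZ => //; apply: cvgB => //.
exact: (cvg_comp _ _ s_cvg (wC _)).
Qed.

End Limits.

Section Geodesic.
Variables (R : realType) (n : nat) (v vinv : R -> R).
Hypotheses (v_cont : continuous v) (vinv_cont : continuous vinv)
  (vK : cancel v vinv) (vinvK : cancel vinv v)
  (v_odd : forall x, v (- x) = - v x).
Local Notation geof := (geof v vinv).

Lemma vinv_odd x : vinv (- x) = - vinv x.
Proof. by rewrite -{1}(vinvK x) -v_odd vK. Qed.

Lemma geof_id (a : 'rV[R]_n) g : geof a a g = a.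
Proof. by rewrite /geof eqxx. Qed.

Definition line_at (a b : 'rV[R]_n) (t : R) : 'rV[R]_n :=
  b + (t - dotp b (unitdir a b)) *: unitdir a b.

Section Line.
Variables a b : 'rV[R]_n.
Hypothesis ab : a != b.
Local Notation e := (unitdir a b).
Local Notation pt := (line_at a b).

Lemma dotp_line_at t : dotp (pt t) e = t.
Proof. by rewrite dotpDl dotpZl dotp_unitdir // mulr1 addrC subrK. Qed.

Lemma line_at_inj : injective pt.
Proof. by move=> x y E; rewrite -(dotp_line_at x) E dotp_line_at. Qed.

Lemma line_at_conv g x y : (1 - g) *: pt x + g *: pt y = pt ((1 - g) * x + g * y).
Proof.
rewrite /line_at !scalerDr !scalerA addrACA -scalerDl subrK scale1r -scalerDl.
by congr (_ + _ *: _); ring.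
Qed.

Lemma line_atB x y : pt x - pt y = (x - y) *: e.
Proof.
rewrite /line_at opprD addrACA subrr add0r -scalerBl; congr (_ *: _).
by rewrite opprB addrA subrK.
Qed.

Lemma vab_line_at w t : vab w a b (pt t) = pt (w t).
Proof.
rewrite /vab dotp_line_at /line_at -addrA -scalerDl; congr (_ + _ *: _).
by rewrite addrC addrA subrK.
Qed.

Lemma dotp_unitdir_subr : dotp a e = dotp b e + enorm (a - b).
Proof.
have : dotp (a - b) e = enorm (a - b).
  by rewrite {1}subr_unitdir // dotpZl dotp_unitdir // mulr1.
by rewrite dotpBl => <-; rewrite addrC subrK.
Qed.

Lemma line_at_a : pt (dotp a e) = a.
Proof.
by rewrite /line_at dotp_unitdir_subr addrAC subrr add0r -subr_unitdir // addrC subrK.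
Qed.

Lemma line_at_b : pt (dotp b e) = b.
Proof. by rewrite /line_at subrr scale0r addr0. Qed.

Lemma line_at_seg t :
  pt t = b + ((t - dotp b e) / enorm (a - b)) *: (a - b).
Proof.
by rewrite {2}subr_unitdir // scalerA divfK // gt_eqF // enorm_subr_gt0.
Qed.

Lemma geof_line_at x y g :
  geof (pt x) (pt y) g = pt (vinv ((1 - g) * v x + g * v y)).
Proof.
have [<-|xy] := eqVneq x y.
  by rewrite geof_id -mulrDl subrK mul1r vK.
have pxy : pt x != pt y by apply: contra xy => /eqP /line_at_inj ->.
have xy0 : x - y != 0 by rewrite subr_eq0.
have par := unitdir_parallel ab xy0 (line_atB x y).
rewrite /geof (negPf pxy) (vab_unitdir_eq v_odd par).
by rewrite (vab_unitdir_eq vinv_odd par) !vab_line_at line_at_conv vab_line_at.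
Qed.

Lemma geof_line g :
  geof a b g = pt (vinv ((1 - g) * v (dotp a e) + g * v (dotp b e))).
Proof. by rewrite -geof_line_at line_at_a line_at_b. Qed.

Lemma geof_segment g : 0 <= g <= 1 ->
  exists2 mu, 0 <= mu <= 1 & geof a b g = b + mu *: (a - b).
Proof.
move=> g01; have L_gt0 := enorm_subr_gt0 ab.
pose x := vinv ((1 - g) * v (dotp a e) + g * v (dotp b e)).
exists ((x - dotp b e) / enorm (a - b)); last by rewrite geof_line line_at_seg.
have sab : dotp b e <= dotp a e by rewrite dotp_unitdir_subr lerDl ltW.
have /andP[xb xa] : dotp b e <= x <= dotp a e.
  exact: can_conv_in_itv v_cont vK vinvK sab g01.
rewrite divr_ge0 ?subr_ge0 ?ler_pdivrMr ?mul1r //=; last exact: ltW.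
by rewrite lerBlDl -dotp_unitdir_subr.
Qed.
End Line.

Lemma geof0 (a b : 'rV[R]_n) : geof a b 0 = a.
Proof.
have [<-|ab] := eqVneq a b; first exact: geof_id.
by rewrite geof_line // subr0 mul1r mul0r addr0 vK line_at_a.
Qed.

Lemma geof1 (a b : 'rV[R]_n) : geof a b 1 = b.
Proof.
have [<-|ab] := eqVneq a b; first exact: geof_id.
by rewrite geof_line // subrr mul0r mul1r add0r vK line_at_b.
Qed.

Lemma geof_comp (a b : 'rV[R]_n) al be ga :
  geof a b ((1 - ga) * al + ga * be) =
  geof (geof a b al) (geof a b be) ga.
Proof.
have [<-|ab] := eqVneq a b; first by rewrite !geof_id.
rewrite !(geof_line ab) (geof_line_at ab) !vinvK.
by congr (line_at _ _ (vinv _)); ring.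
Qed.

Lemma geof_convex (a b : 'rV[R]_n) g : 0 <= g <= 1 ->
  exists2 mu, 0 <= mu <= 1 & geof a b g = mu *: a + (1 - mu) *: b.
Proof.
move=> g01; have [<-|ab] := eqVneq a b.
  by exists 1; rewrite ?lexx ?ler01 // geof_id subrr scale0r addr0 scale1r.
have [mu mu01 ->] := geof_segment ab g01.
by exists mu => //; apply/rowP => i; rewrite !mxE; ring.
Qed.

Lemma geof_cvg_offdiag (a b : 'rV[R]_n) g : a != b ->
  (fun x : ('rV[R]_n * 'rV[R]_n) * R => geof x.1.1 x.1.2 x.2) @ nbhs ((a, b), g)
  --> geof a b g.
Proof.
move=> ab; pose G (x : ('rV[R]_n * 'rV[R]_n) * R) := vab vinv x.1.1 x.1.2
  ((1 - x.2) *: vab v x.1.1 x.1.2 x.1.1 + x.2 *: vab v x.1.1 x.1.2 x.1.2).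
have c11 : (fun x : ('rV[R]_n * 'rV[R]_n) * R => x.1.1) @ nbhs ((a, b), g) --> a.
  exact: (cvg_comp _ _ cvg_fst cvg_fst).
have c12 : (fun x : ('rV[R]_n * 'rV[R]_n) * R => x.1.2) @ nbhs ((a, b), g) --> b.
  exact: (cvg_comp _ _ cvg_fst cvg_snd).
have c2 : (fun x : ('rV[R]_n * 'rV[R]_n) * R => x.2) @ nbhs ((a, b), g) --> g.
  exact: cvg_snd.
have G_cvg : G @ nbhs ((a, b), g) --> geof a b g.
  rewrite /Defs.geof (negPf ab); apply: cvg_vab => //; apply: cvgD.
    apply: cvgZ; first by apply: cvgB => //; exact: cvg_cst.
    exact: cvg_vab.
  apply: cvgZ => //; exact: cvg_vab.
apply: cvg_trans G_cvg; apply: near_eq_cvg.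
have xy_gt0 := cvgr_gt _ (cvg_enorm (cvgB c11 c12)) _ (enorm_subr_gt0 ab).
near=> x; rewrite /G /Defs.geof ifF //; apply/eqP => xy.
suff : 0 < enorm (x.1.1 - x.1.2) by rewrite xy subrr enorm0 ltxx.
by near: x; exact: xy_gt0.
Unshelve. all: by end_near.
Qed.

Lemma geof_normr_lt (c x y : 'rV[R]_n) g eps : 0 <= g <= 1 ->
  `|c - x| < eps -> `|c - y| < eps -> `|c - geof x y g| < eps.
Proof.
move=> g01 cx cy; have [mu mu01 ->] := geof_convex x y g01.
have -> : c - (mu *: x + (1 - mu) *: y) = mu *: (c - x) + (1 - mu) *: (c - y).
  by apply/rowP => i; rewrite !mxE; ring.
apply: le_lt_trans (ler_normD _ _) _; case/andP: (mu01) => m0 m1.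
by rewrite !normrZ ger0_norm // ger0_norm ?subr_ge0 // conv_ltr.
Qed.

Lemma geof_continuous :
  {within [set x : ('rV[R]_n * 'rV[R]_n) * R |
           [set: 'rV[R]_n * 'rV[R]_n] x.1 /\ x.2 \in `[0, 1]],
     continuous (fun x => geof x.1.1 x.1.2 x.2)}.
Proof.
apply/subspace_continuousP => -[[a b] g] _ /=; rewrite /from_subspace /=.
have [<-|ab] := eqVneq a b; last first.
  by apply: cvg_within_filter; exact: geof_cvg_offdiag.
have c11 : (fun x : ('rV[R]_n * 'rV[R]_n) * R => x.1.1) @ nbhs ((a, a), g) --> a.
  exact: (cvg_comp _ _ cvg_fst cvg_fst).
have c12 : (fun x : ('rV[R]_n * 'rV[R]_n) * R => x.1.2) @ nbhs ((a, a), g) --> a.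
  exact: (cvg_comp _ _ cvg_fst cvg_snd).
rewrite geof_id; apply/cvgrPdist_lt => eps eps_gt0.
have near_a1 := proj1 (cvgrPdist_lt _ _) c11 _ eps_gt0.
have near_a2 := proj1 (cvgrPdist_lt _ _) c12 _ eps_gt0.
near=> x; apply: geof_normr_lt.
- have [_] : [set x : ('rV[R]_n * 'rV[R]_n) * R |
              [set: 'rV[R]_n * 'rV[R]_n] x.1 /\ x.2 \in `[0, 1]] x.
    by near: x; exact: near_withinT.
  by rewrite in_itv.
- by near: x; apply: cvg_within; exact: near_a1.
- by near: x; apply: cvg_within; exact: near_a2.
Unshelve. all: by end_near.
Qed.

Lemma geof_geodesic_solution :
  geodesic_solution [set: 'rV[R]_n * 'rV[R]_n] geof.
Proof.
split; first exact: openT.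
split=> //; split; first exact: geof_continuous.
by move=> a b _ al be ga _ _ _; rewrite geof0 ?geof1 ?geof_comp.
Qed.

Lemma enorm_geof_segment (a b : 'rV[R]_n) g : g \in `[0, 1] ->
  enorm (a - geof a b g) + enorm (geof a b g - b) = enorm (a - b).
Proof.
rewrite in_itv => /(geof_convex a b)[mu /andP[m0 m1] ->].
have -> : a - (mu *: a + (1 - mu) *: b) = (1 - mu) *: (a - b).
  by apply/rowP => i; rewrite !mxE; ring.
have -> : mu *: a + (1 - mu) *: b - b = mu *: (a - b).
  by apply/rowP => i; rewrite !mxE; ring.
by rewrite !enormZ ger0_norm ?subr_ge0 // ger0_norm //; ring.
Qed.

Lemma geof_ball_image (c : 'rV[R]_n) r : 0 < r ->
  let B := [set x : 'rV[R]_n | enorm (x - c) < r] in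
  [set geof x.1.1 x.1.2 x.2 | x in [set x : ('rV[R]_n * 'rV[R]_n) * R |
     B x.1.1 /\ B x.1.2 /\ x.2 \in `[0, 1]]] = B.
Proof.
move=> r_gt0 B; apply/seteqP; split; last first.
  move=> x Bx; exists ((x, x), 0); last exact: geof_id.
  by rewrite /= in_itv /= lexx ler01.
move=> z [[[x y] g] /= [Bx [By]]].
rewrite in_itv => /(geof_convex x y)[mu mu01 ->] <-; rewrite /B /=.
have -> : mu *: x + (1 - mu) *: y - c = mu *: (x - c) + (1 - mu) *: (y - c).
  by apply/rowP => i; rewrite !mxE; ring.
exact: enorm_conv_lt.
Qed.
End Geodesic.

Unset Implicit Arguments. Set Strict Implicit.

Theorem mainTheorem8 (R : realType) (n : nat) (v vinv : R -> R)
  (v_cont : continuous v) (vinv_cont : continuous vinv)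
  (vK : cancel v vinv) (vinvK : cancel vinv v)
  (v_odd : forall x, v (- x) = - v x) :
  (forall a b : 'rV[R]_n, a != b ->
     cancel (vab v a b) (vab vinv a b) /\ cancel (vab vinv a b) (vab v a b)) /\
  geodesic_solution [set: 'rV[R]_n * 'rV[R]_n] (geof v vinv) /\
  (forall (a b : 'rV[R]_n) (g : R), g \in `[0, 1] ->
     enorm (a - geof v vinv a b g) + enorm (geof v vinv a b g - b)
     = enorm (a - b)) /\
  (forall (c : 'rV[R]_n) (r : R), 0 < r ->
     let B := [set x : 'rV[R]_n | enorm (x - c) < r] in
     [set geof v vinv x.1.1 x.1.2 x.2 |
        x in [set x : ('rV[R]_n * 'rV[R]_n) * R |
               B x.1.1 /\ B x.1.2 /\ x.2 \in `[0, 1]]] = B).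
Proof.
split; first by move=> a b ab; split; apply: vab_can.
split; first exact: geof_geodesic_solution.
by split; [exact: enorm_geof_segment | exact: geof_ball_image].
Qed.
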